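(* Let $L$ be a combinatorial tiling locally isomorphic to $K$, and let $L_{\mathrm{aff}}^{(1)}$ be the 1-skeleton of $L_{\mathrm{aff}}$. Let $d'$ be the unit-edge metric on $L_{\mathrm{aff}}^{(1)}$ and $d$ the path metric on $L_{\mathrm{aff}}$ restricted to $L_{\mathrm{aff}}^{(1)}$. Then $d'$ and $d$ are equivalent on $L_{\mathrm{aff}}^{(1)}$; more precisely, $d\le d'\le 3d$.
   Context: A combinatorial tiling is a 2-dimensional CW-complex homeomorphic to the plane. The combinatorial pentagonal tiling $K$ is built as follows: $K_0$ is a (decorated) combinatorial pentagon, i.e. a space homeomorphic to the closed disk with five distinguished boundary points; the pentagonal subdivision rule $\omega$ replaces each pentagon $t$ by a supertile $\omega(t)$ consisting of six pentagons (a central pentagon surrounded by a ring of five, combinatorially half a dodecahedron), each edge of $t$ being split into two edges, with decorations of the subtiles prescribed by the rule (finitely many decorated prototiles); $K_n:=\omega^n(K_0)$, embeddings $\iota_n:K_n\to K_{n+1}$ send the central pentagon to the central pentagon, and $K:=\varinjlim K_n$. A combinatorial tiling $L$ is locally isomorphic to $K$ if every finite patch (finite subcomplex) of $L$ is isomorphic, via a cell-preserving decoration-preserving isomorphism, to a patch of $K$. For such $L$, $L_{\mathrm{aff}}$ is the space $L$ with the metric obtained by making each edge isometric to $[0,1]$ and each face isometric to a Euclidean regular pentagon of side length $1$; the distance $d$ between two points is the length of a shortest path between them. The unit-edge metric $d'$ on the 1-skeleton is the length of a shortest path within the 1-skeleton (edge-path), each edge having length $1$. *)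

From mathcomp Require Import ssreflect ssrfun ssrbool eqtype ssrnat div seq fintype.
From Stdlib Require Import Reals Relations.
From Coquelicot Require Import Rbar Lub.

Set Implicit Arguments.
Unset Strict Implicit.
Unset Printing Implicit Defensive.

Local Open Scope R_scope.

Definition pt2 := (R * R)%type.

Definition edist (x y : pt2) : R :=
  sqrt ((fst x - fst y) ^ 2 + (snd x - snd y) ^ 2).

(* circumradius of the regular pentagon with side 1 *)
Definition circumR : R := / (2 * sin (PI / 5)).

(* vertex i (indices read mod 5 automatically by periodicity) *)
Definition pvert (i : nat) : pt2 :=
  (circumR * cos (2 * PI * INR i / 5), circumR * sin (2 * PI * INR i / 5)).

Definition comb (t : R) (x y : pt2) : pt2 :=
  ((1 - t) * fst x + t * fst y, (1 - t) * snd x + t * snd y).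

Definition in_pent (x : pt2) : Prop :=
  exists a : nat -> R, (forall k, 0 <= a k) /\
    a 0%nat + a 1%nat + a 2%nat + a 3%nat + a 4%nat = 1 /\
    x = (a 0%nat * fst (pvert 0) + a 1%nat * fst (pvert 1) + a 2%nat * fst (pvert 2)
         + a 3%nat * fst (pvert 3) + a 4%nat * fst (pvert 4),
         a 0%nat * snd (pvert 0) + a 1%nat * snd (pvert 1) + a 2%nat * snd (pvert 2)
         + a 3%nat * snd (pvert 3) + a 4%nat * snd (pvert 4)).

Definition side_pt (i : 'I_5) (t : R) : pt2 := comb t (pvert i) (pvert (i.+1)).

(* symmetries of the pentagon: rotation by 2*pi*k/5, after an optional
   reflection in the x-axis *)
Definition psym := ('I_5 * bool)%type.

Definition sym_act (s : psym) (x : pt2) : pt2 :=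
  let y := if s.2 then (fst x, - snd x) else x in
  let th := 2 * PI * INR s.1 / 5 in
  (cos th * fst y - sin th * snd y, sin th * fst y + cos th * snd y).

(* glue f i = (g, j) : side i of face f is glued to side j of face g, *)
(* the parameter t on the former matching 1 - t on the latter.         *)

Record PentComplex (D : Type) := {
  face : Type;
  glue : face -> 'I_5 -> face * 'I_5;
  label : face -> D
}.
Arguments face {D} p.
Arguments glue {D} p _ _.
Arguments label {D} p _.

Section Complex.
Variables (D : Type) (L : PentComplex D).

Definition cpt := (face L * pt2)%type.

Definition glue_rel (p q : cpt) : Prop :=
  exists (i : 'I_5) (t : R), 0 <= t <= 1 /\ snd p = side_pt i t /\
    snd q = side_pt (glue L (fst p) i).2 (1 - t) /\ fst q = (glue L (fst p) i).1.

Definition eqv : cpt -> cpt -> Prop := clos_refl_sym_trans cpt glue_rel.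

Definition valid (p : cpt) : Prop := in_pent (snd p).

Definition on_skel (p : cpt) : Prop :=
  exists (i : 'I_5) (t : R), 0 <= t <= 1 /\ snd p = side_pt i t.

(* a step (f, x, y) is a straight segment from x to y inside face f *)
Definition step := (face L * pt2 * pt2)%type.

Fixpoint chain_ok (seg_ok : pt2 -> pt2 -> Prop) (p q : cpt) (s : seq step)
  : Prop :=
  match s with
  | [::] => eqv p q
  | (f, x, y) :: s' =>
      seg_ok x y /\ eqv p (f, x) /\ chain_ok seg_ok (f, y) q s'
  end.

Fixpoint chain_len (s : seq step) : R :=
  match s with
  | [::] => 0
  | (_, x, y) :: s' => edist x y + chain_len s'
  end.

Definition face_seg (x y : pt2) : Prop := in_pent x /\ in_pent y.

Definition edge_seg (x y : pt2) : Prop :=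
  exists (i : 'I_5) (s t : R), 0 <= s <= 1 /\ 0 <= t <= 1 /\
    x = side_pt i s /\ y = side_pt i t.

(* d : path metric of L_aff (infimum of lengths of piecewise straight paths) *)
Definition dist_aff (p q : cpt) : Rbar :=
  Glb_Rbar (fun l => exists s, chain_ok face_seg p q s /\ l = chain_len s).

(* d' : unit-edge path metric of the 1-skeleton *)
Definition dist_skel (p q : cpt) : Rbar :=
  Glb_Rbar (fun l => exists s, chain_ok edge_seg p q s /\ l = chain_len s).

(* L is a combinatorial tiling: every edge lies in exactly two face-sides,
   and the space L_aff is homeomorphic to the plane. *)
Definition is_tiling : Prop :=
  (forall f i, glue L (glue L f i).1 (glue L f i).2 = (f, i)) /\
  (forall f i, glue L f i <> (f, i)) /\
  exists h : cpt -> pt2,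
    (forall p q, valid p -> valid q -> (h p = h q <-> eqv p q)) /\
    (forall z, exists p, valid p /\ h p = z) /\
    (forall p eps, valid p -> 0 < eps -> exists del, 0 < del /\
       forall q, valid q -> Rbar_lt (dist_aff p q) (Finite del) ->
         edist (h p) (h q) < eps) /\
    (forall p eps, valid p -> 0 < eps -> exists del, 0 < del /\
       forall q, valid q -> edist (h p) (h q) < del ->
         Rbar_lt (dist_aff p q) (Finite eps)).

End Complex.

(* every finite patch of L is isomorphic (cell- and decoration-preserving)
   to a patch of M *)
Definition locally_iso (D : Type) (L M : PentComplex D) : Prop :=
  forall S : seq (face L),
    exists (phi : face L -> face M) (rho : face L -> psym),
      (forall f g, List.In f S -> List.In g S -> phi f = phi g -> f = g) /\
      (forall f, List.In f S -> label M (phi f) = label L f) /\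
      (forall f g x y, List.In f S -> List.In g S -> in_pent x -> in_pent y ->
         (@eqv _ L (f, x) (g, y) <->
          @eqv _ M (phi f, sym_act (rho f) x) (phi g, sym_act (rho g) y))).

(* Subtiles of a pentagon t: 0 = central pentagon, k.+1 = ring pentagon *)
(* r_k at corner k of t. With corners C_k, midpoints M_k of side k of  *)
(* t and central vertices Z_k (all counterclockwise), r_k has vertices *)
(* C_k, M_k, Z_k, Z_(k-1), M_(k-1) and the central tile Z_0..Z_4.      *)
(* A face of K_n is a word of length n listing subtile indices from the *)
(* finest level (head) to the coarsest (last).                         *)

Local Open Scope nat_scope.

Definition o5 (n : nat) : 'I_5 := inord (modn n 5).
Definition ringt (k : nat) : 'I_6 := inord (modn k 5).+1.

(* inside the supertile: inl = glued to another subtile;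
   inr (k, true/false) = first/second half of side k of the parent *)
Definition inner (a : 'I_6) (i : 'I_5) : ('I_6 * 'I_5) + ('I_5 * bool) :=
  if (a : nat) == 0%N then inl (ringt (i + 1)%N, o5 2)
  else let k := (a : nat).-1 in
  match (i : nat) with
  | 0 => inr (o5 k, true)
  | 1 => inl (ringt (k + 1)%N, o5 3)
  | 2 => inl (ord0, o5 (k + 4)%N)
  | 3 => inl (ringt (k + 4)%N, o5 1)
  | _ => inr (o5 (k + 4)%N, false)
  end.

(* the subtile side across a half of a parent side glued to parent side j *)
Definition outer (j : 'I_5) (first : bool) : 'I_6 * 'I_5 :=
  if first then (ringt (j + 1)%N, o5 4) else (ringt j, o5 0).

Fixpoint nbr (w : seq 'I_6) (i : 'I_5) : option (seq 'I_6 * 'I_5) :=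
  match w with
  | [::] => None
  | a :: u =>
      match inner a i with
      | inl (b, j) => Some (b :: u, j)
      | inr (k, fh) =>
          match nbr u k with
          | Some (u', j') => Some ((outer j' fh).1 :: u', (outer j' fh).2)
          | None => None
          end
      end
  end.

(* direct limit: K_n embeds in K_(n+1) by w |-> rcons w 0 (central to
   central); faces of K are words with no trailing central letter *)
Fixpoint dropz (s : seq 'I_6) : seq 'I_6 :=
  match s with
  | [::] => [::]
  | a :: s' => if a == ord0 then dropz s' else s
  end.

Definition canon (w : seq 'I_6) : seq 'I_6 := rev (dropz (rev w)).

Lemma dropz_idem s : dropz (dropz s) = dropz s.
Proof.
elim: s => //= a s IH; case: eqP => [_ | /eqP Ha] //=.
by rewrite (negbTE Ha).
Qed.

Lemma canon_idem w : canon (canon w) == canon w.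
Proof. by rewrite /canon revK dropz_idem. Qed.

Definition Kface := {w : seq 'I_6 | canon w == w}.

Definition mkK (w : seq 'I_6) : Kface := exist _ (canon w) (canon_idem w).

Definition glueK (w : Kface) (i : 'I_5) : Kface * 'I_5 :=
  match nbr (rcons (proj1_sig w) ord0) i with
  | Some (w', j) => (mkK w', j)
  | None => (w, i)
  end.

(* decorations: K_0 carries d0; subtile a of a tile decorated d carries
   sub d a *)
Definition labelK (D : Type) (sub : D -> 'I_6 -> D) (d0 : D) (w : Kface) : D :=
  foldr (fun a d => sub d a) d0 (proj1_sig w).

Definition Kcomplex (D : Type) (sub : D -> 'I_6 -> D) (d0 : D) : PentComplex D :=
  {| face := Kface; glue := glueK; label := labelK sub d0 |}.

From mathcomp Require Import ssreflect ssrfun ssrbool eqtype ssrnat seq fintype div.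
From Stdlib Require Import Reals Rgeom Relations Lra Classical.
From Coquelicot Require Import Rbar Lub.

(* A piecewise-straight path of L_aff between skeleton points is turned into an
   edge path at most three times as long.  Corners of the path in the interior of
   a face are removed by the triangle inequality, so that each remaining segment
   joins two boundary points of one regular pentagon; such a segment is replaced
   by the shorter way round the boundary through at most two vertices.  Because the
   sides have length 1 and the interior angles 3 pi / 5 are obtuse, the boundary
   way is at most three times the chord: for points on adjacent sides by the law
   of cosines, for points on sides two apart because their distance is at least
   the length 1 of the side in between. *)

Set Implicit Arguments.
Unset Strict Implicit.
Unset Printing Implicit Defensive.

Local Open Scope R_scope.

Lemma sqrt_ge_of_pow2_le w z : 0 <= w -> w ^ 2 <= z -> w <= sqrt z.
Proof. by move=> w_ge0 /sqrt_le_1_alt; rewrite sqrt_pow2. Qed.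

Lemma edist_sym x y : edist x y = edist y x.
Proof. by rewrite /edist; f_equal; ring. Qed.

Lemma edist_ge0 x y : 0 <= edist x y.
Proof. exact: sqrt_pos. Qed.

Lemma edist_triangle x y z : edist x z <= edist x y + edist y z.
Proof.
have := triangle (fst x) (snd x) (fst z) (snd z) (fst y) (snd y).
by rewrite /dist_euc /edist !Rsqr_pow2.
Qed.

Definition vsub (x y : pt2) : pt2 := (fst x - fst y, snd x - snd y).
Definition dot (u v : pt2) : R := fst u * fst v + snd u * snd v.

Definition unit_step (a b : pt2) : Prop := dot (vsub b a) (vsub b a) = 1.

Definition nonacute_corner (a b c : pt2) : Prop := 0 <= dot (vsub b a) (vsub c b).

Lemma edist_comb_same a b s t :
  unit_step a b -> edist (comb s a b) (comb t a b) = Rabs (s - t).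
Proof.
case: a b => [a1 a2] [b1 b2]; rewrite /unit_step /dot /vsub /edist /comb /= => ab1.
rewrite -sqrt_Rsqr_abs Rsqr_pow2; f_equal.
transitivity ((s - t) ^ 2 * ((b1 - a1) * (b1 - a1) + (b2 - a2) * (b2 - a2))); first ring.
by rewrite ab1; ring.
Qed.

Lemma edist_comb_adjacent a b c s t :
  unit_step a b -> unit_step b c -> nonacute_corner a b c ->
  0 <= s <= 1 -> 0 <= t <= 1 ->
  (1 - s) + t <= 3 * edist (comb s a b) (comb t b c).
Proof.
case: a b c => [a1 a2] [b1 b2] [c1 c2].
rewrite /unit_step /nonacute_corner /dot /vsub /edist /comb /= => ab1 bc1 corner s01 t01.
set d := (b1 - a1) * (c1 - b1) + (b2 - a2) * (c2 - b2) in corner.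
(* law of cosines: the squared distance is at least (1 - s)^2 + t^2 *)
have -> : ((1 - s) * a1 + s * b1 - ((1 - t) * b1 + t * c1)) ^ 2 +
    ((1 - s) * a2 + s * b2 - ((1 - t) * b2 + t * c2)) ^ 2 =
    (1 - s) ^ 2 * ((b1 - a1) * (b1 - a1) + (b2 - a2) * (b2 - a2))
    + t ^ 2 * ((c1 - b1) * (c1 - b1) + (c2 - b2) * (c2 - b2)) + 2 * (1 - s) * t * d.
  by rewrite /d; ring.
rewrite ab1 bc1.
suff : ((1 - s) + t) / 3 <= sqrt ((1 - s) ^ 2 * 1 + t ^ 2 * 1 + 2 * (1 - s) * t * d) by lra.
apply: sqrt_ge_of_pow2_le; first lra.
have : 0 <= (1 - s) * t * d by apply: Rmult_le_pos; [apply: Rmult_le_pos|]; lra.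
have : 0 <= (1 - s - t) ^ 2 by apply: pow2_ge_0.
have -> : ((1 - s + t) / 3) ^ 2 = (2 * (1 - s) ^ 2 + 2 * t ^ 2 - (1 - s - t) ^ 2) / 9 by field.
have := pow2_ge_0 (1 - s); have := pow2_ge_0 t; lra.
Qed.

Lemma edist_comb_two_apart a b c d s t :
  unit_step b c -> nonacute_corner a b c -> nonacute_corner b c d ->
  0 <= s <= 1 -> 0 <= t <= 1 ->
  (1 - s) + 1 + t <= 3 * edist (comb s a b) (comb t c d).
Proof.
case: a b c d => [a1 a2] [b1 b2] [c1 c2] [d1 d2].
rewrite /unit_step /nonacute_corner /dot /vsub /edist /comb /= => bc1 abc bcd s01 t01.
set vx := (1 - s) * a1 + s * b1 - ((1 - t) * c1 + t * d1).
set vy := (1 - s) * a2 + s * b2 - ((1 - t) * c2 + t * d2).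
(* the projection of the difference on the middle side [b c] is already at least 1 *)
set w := - (vx * (c1 - b1) + vy * (c2 - b2)).
have w_ge1 : 1 <= w.
  have -> : w = (1 - s) * ((b1 - a1) * (c1 - b1) + (b2 - a2) * (c2 - b2))
      + ((c1 - b1) * (c1 - b1) + (c2 - b2) * (c2 - b2))
      + t * ((c1 - b1) * (d1 - c1) + (c2 - b2) * (d2 - c2)).
    by rewrite /w /vx /vy; ring.
  rewrite bc1.
  have := Rmult_le_pos (1 - s) _ ltac:(lra) abc.
  have := Rmult_le_pos t _ ltac:(lra) bcd.
  lra.
suff : w <= sqrt (vx ^ 2 + vy ^ 2) by move=> /=; lra.
apply: sqrt_ge_of_pow2_le; first lra.
have cauchy : (vx ^ 2 + vy ^ 2) * ((c1 - b1) * (c1 - b1) + (c2 - b2) * (c2 - b2)) - w ^ 2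
    = (vx * (c2 - b2) - vy * (c1 - b1)) ^ 2.
  by rewrite /w; ring.
rewrite bc1 in cauchy.
have := pow2_ge_0 (vx * (c2 - b2) - vy * (c1 - b1)); lra.
Qed.

Lemma chord_sq r a b :
  dot (vsub (r * cos b, r * sin b) (r * cos a, r * sin a))
      (vsub (r * cos b, r * sin b) (r * cos a, r * sin a))
  = r ^ 2 * (2 - 2 * cos (a - b)).
Proof.
rewrite /dot /vsub /= cos_minus.
have := sin2_cos2 a; have := sin2_cos2 b; rewrite /Rsqr => sc_b sc_a.
transitivity (r ^ 2 * ((sin a * sin a + cos a * cos a) + (sin b * sin b + cos b * cos b)
   - 2 * (cos a * cos b + sin a * sin b))); first ring.
by rewrite sc_a sc_b; ring.
Qed.

Lemma chord_dot r a b c :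
  dot (vsub (r * cos b, r * sin b) (r * cos a, r * sin a))
      (vsub (r * cos c, r * sin c) (r * cos b, r * sin b))
  = r ^ 2 * (cos (b - c) - 1 - cos (a - c) + cos (a - b)).
Proof.
rewrite /dot /vsub /= !cos_minus.
have := sin2_cos2 b; rewrite /Rsqr => sc_b.
transitivity (r ^ 2 * ((cos b * cos c + sin b * sin c) - (sin b * sin b + cos b * cos b)
   - (cos a * cos c + sin a * sin c) + (cos a * cos b + sin a * sin b))); first ring.
by rewrite sc_b; ring.
Qed.

Definition pent_angle : R := 2 * PI / 5.

Lemma pvertE k :
  pvert k = (circumR * cos (pent_angle * INR k), circumR * sin (pent_angle * INR k)).
Proof.
by rewrite /pvert (_ : 2 * PI * INR k / 5 = pent_angle * INR k) // /pent_angle; field.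
Qed.

Lemma pvert_add5 k : pvert (k + 5) = pvert k.
Proof.
rewrite !pvertE plus_INR Rmult_plus_distr_l.
have -> : pent_angle * INR 5 = 2 * INR 1 * PI by rewrite /pent_angle /=; field.
by rewrite cos_period sin_period.
Qed.

Lemma pvert_mod k : pvert k = pvert (k %% 5).
Proof.
rewrite {1}(divn_eq k 5); elim: (k %/ 5)%nat => [|m IH]; first by rewrite mul0n add0n.
by rewrite mulSnr addnAC pvert_add5.
Qed.

Definition side (k : nat) (t : R) : pt2 := comb t (pvert k) (pvert k.+1).

Lemma side_mod k t : side k t = side (k %% 5) t.
Proof.
rewrite /side (pvert_mod k.+1) (pvert_mod (k %% 5).+1) -[k.+1]addn1 -[(k %% 5).+1]addn1.
by rewrite modnDml -pvert_mod -(pvert_mod k).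
Qed.

Lemma side_vertex k : side k 1 = side k.+1 0.
Proof. by rewrite /side /comb; f_equal; ring. Qed.

Lemma pvert_unit_step k : unit_step (pvert k) (pvert k.+1).
Proof.
rewrite /unit_step !pvertE chord_sq.
have -> : pent_angle * INR k - pent_angle * INR k.+1 = - (2 * (PI / 5)).
  by rewrite S_INR /pent_angle; field.
have := sin_gt_0 (PI / 5) ltac:(have := PI_RGT_0; lra) ltac:(have := PI_RGT_0; lra).
by rewrite cos_neg cos_2a_sin /circumR => ?; field; lra.
Qed.

Lemma pvert_nonacute_corner k : nonacute_corner (pvert k) (pvert k.+1) (pvert k.+2).
Proof.
rewrite /nonacute_corner !pvertE chord_dot !S_INR.
have -> : pent_angle * (INR k + 1) - pent_angle * (INR k + 1 + 1) = - pent_angle by ring.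
have -> : pent_angle * INR k - pent_angle * (INR k + 1 + 1) = - (2 * pent_angle) by ring.
have -> : pent_angle * INR k - pent_angle * (INR k + 1) = - pent_angle by ring.
rewrite !cos_neg cos_2a_cos.
have : 0 <= cos pent_angle by apply: cos_ge_0; rewrite /pent_angle; have := PI_RGT_0; lra.
have := COS_bound pent_angle.
move=> ? ?; apply: Rmult_le_pos; [exact: pow2_ge_0 | nra].
Qed.

Lemma edist_side k s t : edist (side k s) (side k t) = Rabs (s - t).
Proof. exact/edist_comb_same/pvert_unit_step. Qed.

Lemma edist_side_adjacent k s t : 0 <= s <= 1 -> 0 <= t <= 1 ->
  (1 - s) + t <= 3 * edist (side k s) (side k.+1 t).
Proof.
by apply: edist_comb_adjacent;
  [exact: pvert_unit_step | exact: pvert_unit_step | exact: pvert_nonacute_corner].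
Qed.

Lemma edist_side_two_apart k s t : 0 <= s <= 1 -> 0 <= t <= 1 ->
  (1 - s) + 1 + t <= 3 * edist (side k s) (side k.+2 t).
Proof.
by apply: edist_comb_two_apart;
  [exact: pvert_unit_step | exact: pvert_nonacute_corner | exact: pvert_nonacute_corner].
Qed.

Lemma side_ptE (i : 'I_5) t : side_pt i t = side i t.
Proof. by []. Qed.

Lemma in_pent_side (i : 'I_5) t : 0 <= t <= 1 -> in_pent (side_pt i t).
Proof.
move=> t01; rewrite side_ptE /side (pvert_mod i.+1).
exists (fun n : nat => if n == i then 1 - t else if n == (i.+1 %% 5)%nat then t else 0).
split; first by move=> n; do 2?case: ifP => _; lra.
by case: i => [[|[|[|[|[|//]]]]] ?]; rewrite /comb /=; (split; [ring | f_equal; ring]).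
Qed.

Lemma edge_seg_side k s t : 0 <= s <= 1 -> 0 <= t <= 1 -> edge_seg (side k s) (side k t).
Proof.
move=> s01 t01; exists (o5 k), s, t; do 2 split => //.
by rewrite !side_ptE /o5 inordK ?ltn_pmod // -!side_mod.
Qed.

Lemma ord5_offset (i j : 'I_5) :
  exists2 d, (d <= 2)%nat & (j = i + d %[mod 5])%nat \/ (i = j + d %[mod 5])%nat.
Proof.
case: i j => [[|[|[|[|[|//]]]]] ?] [[|[|[|[|[|//]]]]] ?].
all: first [ (exists 0%nat); [done | (left; reflexivity) || (right; reflexivity)]
           | (exists 1%nat); [done | (left; reflexivity) || (right; reflexivity)]
           | (exists 2%nat); [done | (left; reflexivity) || (right; reflexivity)]].
Qed.

Section Chains.
Variables (D : Type) (L : PentComplex D).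
Implicit Types (P : pt2 -> pt2 -> Prop) (p q r : cpt L) (s : seq (step L)).

Lemma chain_eqv_l P p p' q s : eqv p' p -> chain_ok P p q s -> chain_ok P p' q s.
Proof.
case: s => [|[[g x] y] s] /= p'p; first exact: rst_trans.
by case=> Pxy [pgx rest]; split=> //; split=> //; apply: rst_trans pgx.
Qed.

Lemma chain_cat P p q r s1 s2 :
  chain_ok P p q s1 -> chain_ok P q r s2 -> chain_ok P p r (s1 ++ s2).
Proof.
elim: s1 p => [|[[g x] y] s1 IH] p /=; first by move=> pq; apply: chain_eqv_l.
by case=> Pxy [pgx rest] qr; split=> //; split=> //; apply: IH qr.
Qed.

Lemma chain_len_cat s1 s2 : chain_len (s1 ++ s2) = chain_len s1 + chain_len s2.
Proof. by elim: s1 => [|[[g x] y] s1 IH] /=; rewrite ?IH; ring. Qed.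

Lemma chain_mono P Q p q s :
  (forall x y, P x y -> Q x y) -> chain_ok P p q s -> chain_ok Q p q s.
Proof.
move=> PQ; elim: s p => [|[[g x] y] s IH] p //=.
by case=> Pxy [pgx rest]; split; [exact: PQ | split=> //; exact: IH].
Qed.

Definition step_rev (st : step L) : step L := let: (g, x, y) := st in (g, y, x).

Definition chain_rev s : seq (step L) := rev (map step_rev s).

Lemma chain_rev_ok P p q s : (forall x y, P x y -> P y x) ->
  chain_ok P p q s -> chain_ok P q p (chain_rev s).
Proof.
move=> Psym; elim: s p => [|[[g x] y] s IH] p /=; first exact: rst_sym.
case=> Pxy [pgx rest]; rewrite /chain_rev /= rev_cons -cats1.
apply: chain_cat (IH _ rest) _; split; first exact: Psym.
by split; [exact: rst_refl | exact: rst_sym].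
Qed.

Lemma chain_len_rev s : chain_len (chain_rev s) = chain_len s.
Proof.
elim: s => [|[[g x] y] s IH] //=.
by rewrite /chain_rev /= rev_cons -cats1 chain_len_cat IH /= edist_sym; ring.
Qed.

Lemma glue_rel_on_skel p q : glue_rel p q -> on_skel p /\ on_skel q.
Proof.
case=> i [t [t01 [p_side [q_side _]]]]; split; first by exists i, t.
by exists (glue L p.1 i).2, (1 - t); split; first lra.
Qed.

Lemma eqv_on_skel p q : eqv p q -> on_skel p <-> on_skel q.
Proof. by elim=> [x y /glue_rel_on_skel [] | x | x y _ | x y z _ IH1 _ IH2]; tauto. Qed.

Lemma eqv_off_skel p q : eqv p q -> ~ on_skel p -> p = q.
Proof.
elim=> [x y /glue_rel_on_skel [] | x | x y xy IH | x y z _ IH1 _ IH2] //; try tauto.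
- by move=> y_off; apply/esym/IH => /(eqv_on_skel xy).
- by move=> x_off; move: (x_off); rewrite (IH1 x_off); apply: IH2.
Qed.
End Chains.

Section BoundaryPaths.
Variables (D : Type) (L : PentComplex D) (f : face L).

Definition short_boundary_path (x y : pt2) : Prop :=
  exists2 sc, chain_ok edge_seg ((f, x) : cpt L) (f, y) sc & chain_len sc <= 3 * edist x y.

Lemma short_boundary_path_sym x y : short_boundary_path x y -> short_boundary_path y x.
Proof.
case=> sc sc_ok sc_len; exists (chain_rev sc); last by rewrite chain_len_rev edist_sym.
apply: chain_rev_ok sc_ok => {sc_len}x' y' [i [a [b [a01 [b01 [-> ->]]]]]].
by exists i, b, a.
Qed.

Lemma side_chain k s t : 0 <= s <= 1 -> 0 <= t <= 1 ->
  chain_ok edge_seg ((f, side k s) : cpt L) (f, side k t) [:: (f, side k s, side k t)].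
Proof. by move=> s01 t01; split; [exact: edge_seg_side | split; exact: rst_refl]. Qed.

Lemma short_boundary_path_same k s t : 0 <= s <= 1 -> 0 <= t <= 1 ->
  short_boundary_path (side k s) (side k t).
Proof.
move=> s01 t01; exists [:: (f, side k s, side k t)]; first exact: side_chain.
by have := edist_ge0 (side k s) (side k t); rewrite /=; lra.
Qed.

Lemma short_boundary_path_adjacent k s t : 0 <= s <= 1 -> 0 <= t <= 1 ->
  short_boundary_path (side k s) (side k.+1 t).
Proof.
move=> s01 t01.
exists ([:: (f, side k s, side k 1)] ++ [:: (f, side k.+1 0, side k.+1 t)]).
  apply: chain_cat (side_chain _ s01 _) _; first lra.
  by rewrite side_vertex; apply: side_chain => //; lra.
rewrite chain_len_cat /= !edist_side.
have := edist_side_adjacent k s01 t01; split_Rabs; lra.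
Qed.

Lemma short_boundary_path_two_apart k s t : 0 <= s <= 1 -> 0 <= t <= 1 ->
  short_boundary_path (side k s) (side k.+2 t).
Proof.
move=> s01 t01.
exists ([:: (f, side k s, side k 1)] ++ [:: (f, side k.+1 0, side k.+1 1)]
        ++ [:: (f, side k.+2 0, side k.+2 t)]).
  apply: chain_cat (side_chain _ s01 _) _; first lra.
  rewrite side_vertex; apply: chain_cat (side_chain _ _ _) _; try lra.
  by rewrite side_vertex; apply: side_chain => //; lra.
rewrite !chain_len_cat /= !edist_side.
have := edist_side_two_apart k s01 t01; split_Rabs; lra.
Qed.

Lemma short_boundary_path_sides (i j : 'I_5) s t : 0 <= s <= 1 -> 0 <= t <= 1 ->
  short_boundary_path (side_pt i s) (side_pt j t).
Proof.
have offset k d s' t' : (d <= 2)%nat -> 0 <= s' <= 1 -> 0 <= t' <= 1 ->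
    short_boundary_path (side k s') (side (k + d) t').
  case: d => [|[|[|//]]] _; rewrite ?addn0 ?addn1 ?addn2.
  - exact: short_boundary_path_same.
  - exact: short_boundary_path_adjacent.
  - exact: short_boundary_path_two_apart.
move=> s01 t01; rewrite !side_ptE; case: (ord5_offset i j) => d d_le2 [ji | ij].
- by rewrite (side_mod j) ji -side_mod; apply: offset.
- by apply: short_boundary_path_sym; rewrite (side_mod i) ij -side_mod; apply: offset.
Qed.

Lemma short_boundary_path_on_skel x y :
  on_skel ((f, x) : cpt L) -> on_skel ((f, y) : cpt L) -> short_boundary_path x y.
Proof.
by move=> [i [a [a01 /= ->]]] [j [b [b01 /= ->]]]; apply: short_boundary_path_sides.
Qed.
End BoundaryPaths.

Section EdgeChains.
Variables (D : Type) (L : PentComplex D) (P : pt2 -> pt2 -> Prop).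

Lemma edge_chain_of_segment (q : cpt L) s : on_skel q ->
  forall g x y, on_skel ((g, x) : cpt L) -> chain_ok P ((g, y) : cpt L) q s ->
  exists2 sc, chain_ok edge_seg ((g, x) : cpt L) q sc
            & chain_len sc <= 3 * (edist x y + chain_len s).
Proof.
move=> q_on; elim: s => [|[[g' x'] y'] s IH] g x y gx_on /=.
  move=> gy_q; have gy_on := proj2 (eqv_on_skel gy_q) q_on.
  have [sc sc_ok sc_len] := short_boundary_path_on_skel gx_on gy_on.
  by exists sc; [rewrite -[sc]cats0; apply: chain_cat sc_ok _ | lra].
case=> _ [gy_gx' rest]; case: (classic (on_skel ((g, y) : cpt L))) => [gy_on | gy_off].
  have [sc1 ok1 len1] := short_boundary_path_on_skel gx_on gy_on.
  have [sc2 ok2 len2] := IH g' x' y' (proj1 (eqv_on_skel gy_gx') gy_on) rest.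
  exists (sc1 ++ sc2); first by apply: chain_cat ok1 (chain_eqv_l gy_gx' ok2).
  by rewrite chain_len_cat; lra.
(* a path through an interior point [y] stays in the face: drop the corner at [y] *)
case: (eqv_off_skel gy_gx' gy_off) => <- <- in rest *.
have [sc ok len] := IH g x y' gx_on rest.
by exists sc => //; have := edist_triangle x y y'; lra.
Qed.

Lemma edge_chain_le (p q : cpt L) s : on_skel p -> on_skel q -> chain_ok P p q s ->
  exists2 sc, chain_ok edge_seg p q sc & chain_len sc <= 3 * chain_len s.
Proof.
case: s => [|[[g x] y] s] p_on q_on /=; first by move=> pq; exists [::] => //=; lra.
case=> _ [pgx rest]; have gx_on := proj1 (eqv_on_skel pgx) p_on.
have [sc ok len] := edge_chain_of_segment q_on gx_on rest.
by exists sc => //; apply: chain_eqv_l pgx ok.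
Qed.
End EdgeChains.

Lemma edge_seg_face_seg x y : edge_seg x y -> face_seg x y.
Proof. by case=> i [s [t [s01 [t01 [-> ->]]]]]; split; apply: in_pent_side. Qed.

Lemma Glb_Rbar_le_scal (A B : R -> Prop) c : 0 < c ->
  (forall l, A l -> exists2 l', B l' & l' <= c * l) ->
  Rbar_le (Glb_Rbar B) (Rbar_mult c (Glb_Rbar A)).
Proof.
move=> c_gt0 AB; have [lbA glbA] := Glb_Rbar_correct A; have [lbB _] := Glb_Rbar_correct B.
have c_pinf : Rbar_mult c p_infty = p_infty.
  exact/is_Rbar_mult_unique/is_Rbar_mult_sym/is_Rbar_mult_p_infty_pos.
case EB: (Glb_Rbar B) => [b | | ] //.
- have bc : b / c * c = b by field; lra.
  have : Rbar_le (b / c) (Glb_Rbar A).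
    by apply: glbA => l /AB [l' /lbB]; rewrite EB /= => bl' l'cl; nra.
  case: (Glb_Rbar A) => [a | | ] ba; last by [].
  + by have := Rmult_le_compat_l c _ _ (Rlt_le _ _ c_gt0) ba; rewrite /=; lra.
  + by rewrite c_pinf.
- (* an empty B forces an empty A *)
  have : Rbar_le p_infty (Glb_Rbar A) by apply: glbA => l /AB [l' /lbB]; rewrite EB.
  by case: (Glb_Rbar A) => // _; rewrite c_pinf.
Qed.

Theorem theorem2p2 (D : finType) (sub : D -> 'I_6 -> D) (d0 : D)
  (Hd0 : sub d0 ord0 = d0)
  (L : PentComplex D) (HL : is_tiling L)
  (Hloc : locally_iso L (Kcomplex sub d0)) :
  forall p q : cpt L,
    valid p -> valid q -> on_skel p -> on_skel q ->
    Rbar_le (dist_aff p q) (dist_skel p q) /\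
    Rbar_le (dist_skel p q) (Rbar_mult (Finite 3) (dist_aff p q)).
Proof.
move=> p q _ _ p_on q_on; split.
- apply: is_glb_Rbar_subset (Glb_Rbar_correct _) (Glb_Rbar_correct _).
  move=> _ [s [s_ok ->]]; exists s; split=> //.
  exact: chain_mono edge_seg_face_seg s_ok.
- apply: Glb_Rbar_le_scal => [|_ [s [s_ok ->]]]; first lra.
  have [sc sc_ok sc_len] := edge_chain_le p_on q_on s_ok.
  by exists (chain_len sc) => //; exists sc.
Qed.
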